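(* Let $\mathcal G$ be a connected rank-3 tensor Feynman graph as in the context, with $N_{\rm ext}$ external legs. Let \[ \omega_{\deg}(\mathcal G)=-(V-1)+\tfrac12F_{\rm int}(\mathcal G). \] Then: \begin{itemize} \item if $N_{\rm ext}\ge6$, then $\omega_{\deg}(\mathcal G)\le-N_{\rm ext}/12$; \item if $N_{\rm ext}=4$, then $\omega_{\deg}(\mathcal G)\le0$; \item if $N_{\rm ext}=2$, then $\omega_{\deg}(\mathcal G)\le1$. \end{itemize}
   Context: Bubbles. Use colors $1,2,3$ for bubble edges and color $0$ for propagator lines. The tetrahedral bubble $\mathbf b_+$ is $K_4$ on $w_1,\dots,w_4$ with the following colored edges: \begin{itemize} \item $w_1w_2$ and $w_3w_4$ of color 1; \item $w_1w_3$ and $w_2w_4$ of color 2; \item $w_1w_4$ and $w_2w_3$ of color 3. \end{itemize} For $c\in\{1,2,3\}$, the melonic bubble $\mathbf b_c$ has vertices $w_1,\dots,w_4$ and the following edges: \begin{itemize} \item $w_1w_2$ doubled, carrying the two colors of $\{1,2,3\}\setminus\{c\}$; \item $w_3w_4$ doubled, carrying the two colors of $\{1,2,3\}\setminus\{c\}$; \item single edges $w_2w_3$ and $w_4w_1$ of color $c$. \end{itemize} Graphs. A graph $\mathcal G$ consists of the following data: \begin{itemize} \item $V=V_++V_m$ interaction vertices (copies of $\mathbf b_+$, resp. of some $\mathbf b_c$); \item $L$ internal color-0 lines joining bubble vertices, each bubble vertex incident to at most one line; \item a color-0 external leg at each bubble vertex not incident to a line. \end{itemize} Let $N_{\rm ext}$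 be the number of external legs. The colored extension $\mathcal G_{\rm col}$ is the resulting 4-edge-colored graph. Connected means $\mathcal G_{\rm col}$ is connected. Faces. A face of color $c\in\{1,2,3\}$ is a connected component of the subgraph of $\mathcal G_{\rm col}$ formed by the color-0 edges and half-edges and the color-$c$ edges. It is internal if it is a cycle, and external if it is a path between two external legs. $F_{\rm int}(\mathcal G)$ is the number of internal faces. *)

From mathcomp Require Import all_boot all_order all_algebra.
Set Implicit Arguments. Unset Strict Implicit. Unset Printing Implicit Defensive.
Import GRing.Theory Num.Theory.

(* Bubble colors 1,2,3 (color 0 is reserved for propagator lines). *)
Inductive color := C1 | C2 | C3.

(* Kind of interaction vertex: tetrahedral b_+ or melonic b_c. *)
Inductive bkind := Tetra | Melo of color.

Definition color_idx (c : color) : nat :=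
  match c with C1 => 1 | C2 => 2 | C3 => 3 end.

(* Bubble vertices w1..w4 are encoded as 0..3 in 'I_4.
   Partner of vertex i along the perfect matching "xor k":
     k = 1 : {w1w2, w3w4};   k = 2 : {w1w3, w2w4};   k = 3 : {w1w4, w2w3}. *)
Definition flip (k : nat) (i : 'I_4) : 'I_4 := inord (Nat.lxor i k).

(* The matching formed by the color-c edges of a bubble of kind b.
   b_+ : color 1 on w1w2,w3w4 ; color 2 on w1w3,w2w4 ; color 3 on w1w4,w2w3.
   b_d : color d on w2w3, w4w1 (matching 3); the two colors /= d on the
         doubled edges w1w2, w3w4 (matching 1). *)
Definition pairing (b : bkind) (c : color) : nat :=
  match b with
  | Tetra => color_idx c
  | Melo d => if color_idx c == color_idx d then 3 else 1
  end.

Section Graph.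
Variable V : nat.
Variable kind : 'I_V -> bkind.
Definition bvert := ('I_V * 'I_4)%type.
(* Propagator lines are encoded by an involution [line] on bubble vertices:
   line x = y <> x means a color-0 line joins x and y;
   line x = x means x carries an external leg. *)
Variable line : bvert -> bvert.

Definition cedge (c : color) (x : bvert) : bvert :=
  (x.1, flip (pairing (kind x.1) c) x.2).

Definition is_ext (x : bvert) : bool := line x == x.

Definition N_ext : nat := #|[set x : bvert | is_ext x]|.

Definition col_adj : rel bvert := fun x y =>
  [|| (line x == y) && (x != y), cedge C1 x == y, cedge C2 x == y
    | cedge C3 x == y].

Definition connected_graph : Prop := forall x y : bvert, connect col_adj x y.

Definition face_adj (c : color) : rel bvert := fun x y =>
  ((line x == y) && (x != y)) || (cedge c x == y).

Definition face (c : color) (x : bvert) : {set bvert} :=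
  [set y | connect (face_adj c) x y].

(* a face is internal iff it contains no external leg (then it is a cycle) *)
Definition internal_face (c : color) (x : bvert) : bool :=
  [forall y, (y \in face c x) ==> ~~ is_ext y].

Definition F_int_c (c : color) : nat :=
  #|[set face c x | x in [set x : bvert | internal_face c x]]|.

Definition F_int : nat := F_int_c C1 + F_int_c C2 + F_int_c C3.

Local Open Scope ring_scope.
Definition omega_deg : rat := - ((V%:R : rat) - 1) + (F_int%:R) / 2.
End Graph.

(* Cutting the line through a bubble vertex x turns x and line x into external
   legs.  If x lies on an internal face of some colour, that face becomes an open
   face joining the two new legs, so the graph stays connected; if x lies on at
   most two internal faces, at most two internal faces are lost.  Such an x exists
   as soon as there is an internal face and an external leg, because lying on
   three internal faces propagates along every edge of the coloured graph.
   Induction on the number of lines thus gives F_int + N_ext <= 2V + 2, the base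
   case F_int = 0 following from the V - 1 lines of a spanning tree.  Hence
   omega_deg <= 2 - N_ext / 2. *)

From mathcomp Require Import all_boot all_order all_algebra zify lra.
Set Implicit Arguments. Unset Strict Implicit. Unset Printing Implicit Defensive.

Lemma connect_sub_in (T : finType) (e e' : rel T) (A : {set T}) :
  (forall x y, x \in A -> e x y -> y \in A /\ e' x y) ->
  forall x y, x \in A -> connect e x y -> connect e' x y.
Proof.
move=> sub_e x _ ax /connectP [p + ->].
elim: p x ax => [|y p IHp] x ax /=; first by move=> _; exact: connect0.
case/andP => /(sub_e _ _ ax) [ay e'xy] /(IHp _ ay).
exact: connect_trans (connect1 e'xy).
Qed.

Lemma odd_card_fixed (T : finType) (f : T -> T) (S : {set T}) :
  involutive f -> {in S, forall u, f u \in S} ->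
  odd #|S| = odd #|[set u in S | f u == u]|.
Proof.
move=> fK; have [n] := ubnP #|S|; elim: n S => // n IHn S.
rewrite ltnS => leSn fS.
have [u /andP [uS fu] | fixS] := pickP [pred u | (u \in S) && (f u != u)]; last first.
  suff -> : [set u in S | f u == u] = S by [].
  apply/setP => u; rewrite inE; case: (boolP (u \in S)) => //= uS.
  by have := fixS u; rewrite /= uS => /negbFE.
have fuS := fS u uS.
set S' := S :\ u :\ f u.
have cardS : #|S| = #|S'|.+2.
  by rewrite (cardsD1 u S) uS (cardsD1 (f u) (S :\ u)) !inE fu fuS.
have fixS' : [set v in S | f v == v] = [set v in S' | f v == v].
  apply/setP => v; rewrite !inE.
  case: (v =P f u) => [-> | _]; first by rewrite fK eq_sym (negbTE fu) !andbF.
  by case: (v =P u) => [-> | _]; first by rewrite (negbTE fu) !andbF.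
rewrite cardS /= negbK fixS' IHn //; first by rewrite cardS in leSn; lia.
move=> v; rewrite !inE => /and3P [vfu vu vS].
rewrite (inj_eq (can_inj fK)) vu fS // andbT.
by apply: contra vfu => /eqP <-; rewrite fK.
Qed.

Lemma flipK k : k \in [:: 1; 2; 3]%N -> involutive (flip k).
Proof.
move=> k123 [[|[|[|[|i]]]] lt_i4] //; move: k123; rewrite !inE => /or3P [] /eqP ->;
  by apply/val_inj; rewrite /flip /= !inordK.
Qed.

Lemma flip_neq k (i : 'I_4) : k \in [:: 1; 2; 3]%N -> flip k i != i.
Proof.
case: i => [[|[|[|[|i]]]] lt_i4] //; rewrite !inE => /or3P [] /eqP -> ;
  by rewrite -val_eqE /flip /= !inordK.
Qed.

Lemma pairing_mem b c : pairing b c \in [:: 1; 2; 3]%N.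
Proof. by case: b => [|d]; case: c => //; case: d. Qed.

Lemma cedgeK V (kind : 'I_V -> bkind) c : involutive (cedge kind c).
Proof. by case=> b i; rewrite /cedge /= flipK // pairing_mem. Qed.

Lemma cedge_neq V (kind : 'I_V -> bkind) c x : cedge kind c x != x.
Proof.
case: x => b i; rewrite /cedge xpair_eqE negb_and eqxx /=.
by rewrite flip_neq // pairing_mem.
Qed.

Section Faces.
Variables (V : nat) (kind : 'I_V -> bkind) (line : bvert V -> bvert V).
Hypothesis lineK : involutive line.

Lemma face_adj_sym c : symmetric (face_adj kind line c).
Proof.
move=> x y; rewrite /face_adj.
by apply/idP/idP => /orP [/andP [/eqP <- nx] | /eqP <-];
  rewrite ?lineK ?cedgeK eqxx ?orbT // eq_sym nx.
Qed.

Lemma col_adj_sym : symmetric (col_adj kind line).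
Proof.
move=> x y; rewrite /col_adj.
apply/idP/idP => /or4P [/andP [/eqP <- nx] | /eqP <- | /eqP <- | /eqP <-];
  by rewrite ?lineK ?cedgeK ?eqxx ?orbT //= eq_sym nx.
Qed.

Lemma face_adj_col c : subrel (face_adj kind line c) (col_adj kind line).
Proof.
by move=> x y; rewrite /face_adj /col_adj => /orP [-> // | ]; case: c => ->; rewrite !orbT.
Qed.

Lemma mem_face_connect c x y :
  y \in face kind line c x -> connect (col_adj kind line) x y.
Proof. by rewrite inE; apply: connect_sub => u v /face_adj_col/connect1. Qed.

Lemma face_id c x : x \in face kind line c x.
Proof. by rewrite inE connect0. Qed.

Lemma mem_face_sym c x y : (y \in face kind line c x) = (x \in face kind line c y).
Proof. by rewrite !inE (sym_connect_sym (face_adj_sym c)). Qed.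

Lemma face_eq c x y :
  y \in face kind line c x -> face kind line c y = face kind line c x.
Proof.
rewrite inE => cxy; apply/setP => z; rewrite !inE.
rewrite (sym_connect_sym (face_adj_sym c)) in cxy.
by rewrite (same_connect (sym_connect_sym (face_adj_sym c)) cxy).
Qed.

Lemma line_in_face c x : line x \in face kind line c x.
Proof.
have [-> | nx] := eqVneq (line x) x; first exact: face_id.
by rewrite inE connect1 // /face_adj eqxx eq_sym nx.
Qed.

Lemma cedge_in_face c x : cedge kind c x \in face kind line c x.
Proof. by rewrite inE connect1 // /face_adj eqxx orbT. Qed.

Lemma internal_face_eq c x y :
  y \in face kind line c x -> internal_face kind line c y = internal_face kind line c x.
Proof. by move=> /face_eq E; rewrite /internal_face E. Qed.

Lemma internal_face_line c x :
  internal_face kind line c (line x) = internal_face kind line c x.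
Proof. exact/internal_face_eq/line_in_face. Qed.

Lemma internal_face_cedge c x :
  internal_face kind line c (cedge kind c x) = internal_face kind line c x.
Proof. exact/internal_face_eq/cedge_in_face. Qed.

Lemma internal_face_ext c x y :
  internal_face kind line c x -> y \in face kind line c x -> ~~ is_ext line y.
Proof. by move=> /forallP /(_ y) /implyP. Qed.

Lemma exists_other_ext c x : is_ext line x ->
  exists2 y, y != x & (y \in face kind line c x) && is_ext line y.
Proof.
move=> ext_x; set S := face kind line c x.
have closedS f : (forall u, f u \in face kind line c u) ->
    {in S, forall u, f u \in S}.
  by move=> f_face u uS; rewrite /S -(face_eq uS) f_face.
have no_fixed_cedge : [set u in S | cedge kind c u == u] = set0.
  by apply/setP => u; rewrite !inE (negbTE (cedge_neq _ _ _)) andbF.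
(* cedge has no fixed point, so #|S| is even, and so is the number of legs on S. *)
have := odd_card_fixed (cedgeK kind c) (closedS _ (cedge_in_face c)).
rewrite no_fixed_cedge cards0 (odd_card_fixed lineK (closedS _ (line_in_face c))).
set E := [set u in S | line u == u].
rewrite (cardsD1 x E) inE face_id (ext_x : line x == x) /= => /negbFE odd_Ex.
have /card_gt0P [y] : 0 < #|E :\ x| by case: #|_| odd_Ex.
by rewrite !inE => /and3P [yx yS ext_y]; exists y => //; rewrite inE yS.
Qed.

End Faces.

Definition cut_line V (line : bvert V -> bvert V) (x z : bvert V) : bvert V :=
  if (z == x) || (z == line x) then z else line z.

Section CutLine.
Variables (V : nat) (kind : 'I_V -> bkind) (line : bvert V -> bvert V) (x : bvert V).
Hypothesis lineK : involutive line.
Local Notation cut := (cut_line line x).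

Lemma cut_lineK : involutive cut.
Proof.
move=> z; rewrite /cut_line.
have [zs | /norP [zx zlx]] := boolP ((z == x) || (z == line x)); first by rewrite /= zs.
have lzx : (line z == x) = (z == line x) by rewrite -(inj_eq (can_inj lineK)) lineK.
by rewrite /= lzx (inj_eq (can_inj lineK)) (negbTE zx) (negbTE zlx) lineK.
Qed.

Lemma cut_line_other z : z != x -> z != line x -> cut z = line z.
Proof. by move=> zx zlx; rewrite /cut_line (negbTE zx) (negbTE zlx). Qed.

Lemma is_ext_cut z : is_ext cut z = [|| is_ext line z, z == x | z == line x].
Proof.
rewrite /is_ext /cut_line; case: ifP => [/orP [] /eqP -> | /norP [zx zlx]];
  by rewrite ?eqxx ?orbT ?orbF.
Qed.

Lemma N_ext_cut : line x != x -> N_ext cut = (N_ext line).+2.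
Proof.
move=> lxx; rewrite /N_ext.
have -> : [set z | is_ext cut z] = x |: (line x |: [set z | is_ext line z]).
  by apply/setP => z; rewrite !inE is_ext_cut orbC -orbA.
by rewrite !cardsU1 !inE /is_ext lineK (eq_sym x) (negbTE lxx).
Qed.

Lemma face_adj_cut c : subrel (face_adj kind cut c) (face_adj kind line c).
Proof.
move=> u v; rewrite /face_adj /cut_line; case: ifP => _ //.
by move=> /orP [/andP [/eqP ->] | ->]; rewrite ?eqxx ?orbT.
Qed.

Lemma face_cut_sub c z : face kind cut c z \subset face kind line c z.
Proof.
apply/subsetP => u; rewrite !inE; apply: connect_sub => a b /face_adj_cut.
exact: connect1.
Qed.

Lemma face_cut c z : x \notin face kind line c z -> face kind cut c z = face kind line c z.
Proof.
move=> xNf; have lxNf : line x \notin face kind line c z.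
  by apply: contra xNf => /(face_eq lineK) <-; rewrite mem_face_sym // line_in_face.
apply/eqP; rewrite eqEsubset face_cut_sub; apply/subsetP => u.
rewrite !inE; apply: (connect_sub_in (A := face kind line c z)) => [a b af ab|].
  split; first by rewrite -(face_eq lineK af) inE connect1.
  rewrite /face_adj cut_line_other //; first by apply: contraNneq xNf => <-.
  by apply: contraNneq lxNf => <-.
exact: face_id.
Qed.

Lemma internal_face_cut c z : internal_face kind line c z ->
  x \notin face kind line c z -> internal_face kind cut c z.
Proof.
move=> int_z xNf; apply/forallP => u; apply/implyP; rewrite face_cut // => uf.
rewrite is_ext_cut (negbTE (internal_face_ext int_z uf)) /=.
apply/norP; split; first by apply: contraNneq xNf => <-.
apply: contraNneq xNf => ulx.
by rewrite -(face_eq lineK uf) ulx mem_face_sym // line_in_face.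
Qed.

Lemma F_int_c_cut c :
  F_int_c kind line c <= F_int_c kind cut c + internal_face kind line c x.
Proof.
rewrite /F_int_c; set A := [set face kind line c z | z in _].
rewrite (cardsD1 (face kind line c x) A) addnC leq_add //.
  apply/subset_leq_card/subsetP => f /setD1P [fNx /imsetP [z + def_f]].
  subst f; rewrite inE => int_z; have xNf : x \notin face kind line c z.
    by apply: contra fNx => /(face_eq lineK) ->.
  by apply/imsetP; exists z; rewrite ?face_cut // inE internal_face_cut.
have [/imsetP [z] | //] := boolP (face kind line c x \in A).
rewrite inE => int_z def_fx.
by rewrite (internal_face_eq lineK (_ : x \in face kind line c z)) ?int_z // -def_fx face_id.
Qed.

Lemma connected_cut c : internal_face kind line c x ->
  connected_graph kind line -> connected_graph kind cut.
Proof.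
move=> int_x conn.
have x_to_lx : connect (col_adj kind cut) x (line x).
  have ext_x : is_ext cut x by rewrite is_ext_cut eqxx orbT.
  (* The other leg on the face of x, formerly internal, can only be line x. *)
  have [y yx /andP [yf ext_y]] := exists_other_ext kind cut_lineK c ext_x.
  move: ext_y; rewrite is_ext_cut (negbTE yx).
  rewrite (negbTE (internal_face_ext int_x (subsetP (face_cut_sub c x) y yf))) /=.
  by move=> /eqP <-; exact: mem_face_connect yf.
have cut_sym := sym_connect_sym (col_adj_sym kind cut_lineK).
move=> u v; apply: connect_sub (conn u v) => a b.
rewrite /col_adj; case/or4P => [/andP [/eqP <- ab] | e | e | e];
  try by apply: connect1; rewrite /col_adj e ?orbT.
have [-> | ax] := eqVneq a x; first exact: x_to_lx.
have [-> | alx] := eqVneq a (line x); first by rewrite lineK cut_sym.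
by apply: connect1; rewrite /col_adj cut_line_other // eqxx ab.
Qed.
End CutLine.

Definition line_ends V (line : bvert V -> bvert V) : {set bvert V} :=
  [set u | ~~ is_ext line u].

Lemma N_ext_line_ends V (line : bvert V -> bvert V) :
  N_ext line + #|line_ends line| = 4 * V.
Proof.
have -> : line_ends line = ~: [set u | is_ext line u] by apply/setP => u; rewrite !inE.
by rewrite /N_ext cardsC card_prod !card_ord mulnC.
Qed.

Section SpanningTree.
Variables (V : nat) (kind : 'I_V -> bkind) (line : bvert V -> bvert V).
Hypotheses (lineK : involutive line) (conn : connected_graph kind line).

Lemma is_ext_line u : is_ext line (line u) = is_ext line u.
Proof. by rewrite /is_ext lineK eq_sym. Qed.

Lemma exists_line_leaving (S : {set 'I_V}) a b : a \in S -> b \notin S ->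
  exists2 u, u \in line_ends line & (u.1 \in S) && ((line u).1 \notin S).
Proof.
move=> aS bNS; apply/exists_inP; apply: contraNT bNS => /exists_inPn noleave.
have closedS : closed (col_adj kind line) [pred p : bvert V | p.1 \in S].
  apply: intro_closed; first exact/sym_connect_sym/col_adj_sym.
  move=> p q + pS; rewrite !inE in pS *.
  rewrite /col_adj => /or4P [/andP [/eqP <- pq] | /eqP <- | /eqP <- | /eqP <-] //.
  have := noleave p; rewrite !inE /is_ext eq_sym pq pS => /(_ isT).
  by rewrite negbK.
by have := closed_connect closedS (conn (a, ord0) (b, ord0)); rewrite !inE aS => <-.
Qed.

Lemma line_ends_tree_bound : 2 * V.-1 <= #|line_ends line|.
Proof.
suff grow : forall n, n < V -> exists S : {set 'I_V},
    #|S| = n.+1 /\ 2 * n <= #|[set u in line_ends line | (u.1 \in S) && ((line u).1 \in S)]|.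
  have [V0 | V_gt0] := posnP V; first by rewrite {1}V0.
  have /grow [S [_ le_S]] : V.-1 < V by rewrite ltn_predL.
  by apply: leq_trans le_S (subset_leq_card _); apply/subsetP => u; rewrite inE => /andP [].
elim=> [V_gt0 | n IHn ltnV].
  by exists [set Ordinal V_gt0]; rewrite cards1.
have [S [cardS le_S]] := IHn (ltnW ltnV).
have [a aS] : exists a, a \in S by apply/set0Pn; rewrite -card_gt0 cardS.
have [b bNS] : exists b, b \notin S.
  apply/existsP; rewrite -negb_forall; apply: contraTN ltnV => /forallP allS.
  by rewrite -leqNgt -cardS -{1}(card_ord V) subset_leq_card //; apply/subsetP => i.
have [u + /andP [uS luNS]] := exists_line_leaving aS bNS; rewrite inE => u_on_line.
exists ((line u).1 |: S); rewrite cardsU1 luNS cardS; split => //.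
set E := [set _ in _ | _] in le_S; set E' := [set _ in _ | _].
have uNE : u \notin E by rewrite !inE (negbTE luNS) !andbF.
have luNE : line u \notin E by rewrite !inE lineK (negbTE luNS) andbF.
have sub : u |: (line u |: E) \subset E'.
  apply/subsetP => v; rewrite !inE => /or3P [/eqP -> | /eqP -> | /and3P [-> -> ->]].
  - by rewrite u_on_line uS eqxx !orbT.
  - by rewrite is_ext_line u_on_line lineK uS eqxx !orbT.
  - by rewrite !orbT.
rewrite mulnS; apply: leq_trans (subset_leq_card sub).
rewrite cardsU1 in_setU1 negb_or uNE andbT cardsU1 luNE.
by rewrite eq_sym -/(is_ext line u) u_on_line.
Qed.
End SpanningTree.

Definition n_int_faces V (kind : 'I_V -> bkind) (line : bvert V -> bvert V) x : nat :=
  internal_face kind line C1 x + internal_face kind line C2 x + internal_face kind line C3 x.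

Section InternalFaces.
Variables (V : nat) (kind : 'I_V -> bkind) (line : bvert V -> bvert V).
Hypothesis lineK : involutive line.
Local Notation n_int := (n_int_faces kind line).

Lemma n_int_faces_gt0P x : reflect (exists c, internal_face kind line c x) (0 < n_int x).
Proof.
rewrite /n_int_faces; apply: (iffP idP) => [pos | [[] ->]]; rewrite ?addn_gt0 ?orbT //.
case i1: (internal_face kind line C1 x); first by exists C1.
case i2: (internal_face kind line C2 x); first by exists C2.
by case i3: (internal_face kind line C3 x); [exists C3 | rewrite i1 i2 i3 in pos].
Qed.

Lemma n_int_faces_le3 x : n_int x <= 3.
Proof. exact: leq_add (leq_add (leq_b1 _) (leq_b1 _)) (leq_b1 _). Qed.

Lemma n_int_faces_cedge_gt0 c x : n_int x = 3 -> 0 < n_int (cedge kind c x).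
Proof.
move=> x3; apply/n_int_faces_gt0P; exists c; rewrite internal_face_cedge //.
by move: x3; rewrite /n_int_faces; case: c; do 3?[case: (internal_face _ _ _ x)].
Qed.

Lemma n_int_faces_line x : n_int (line x) = n_int x.
Proof. by rewrite /n_int_faces !internal_face_line. Qed.

Lemma n_int_faces_ext x : is_ext line x -> n_int x = 0.
Proof.
move=> ext_x; apply/eqP; rewrite -leqn0 leqNgt; apply/n_int_faces_gt0P => -[c int_x].
by have := internal_face_ext int_x (face_id kind line c x); rewrite ext_x.
Qed.

Lemma F_int_cut x : F_int kind line <= F_int kind (cut_line line x) + n_int x.
Proof.
have := F_int_c_cut kind x lineK; rewrite /F_int /n_int_faces.
by move=> cut_c; have := cut_c C1; have := cut_c C2; have := cut_c C3; lia.
Qed.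

Lemma exists_int_faces : 0 < F_int kind line -> exists x, 0 < n_int x.
Proof.
rewrite /F_int !addn_gt0 -orbA => /or3P [] /card_gt0P [f /imsetP [x]];
  by rewrite inE => int_x _; exists x; apply/n_int_faces_gt0P; eexists; exact: int_x.
Qed.

Hypothesis conn : connected_graph kind line.

Lemma exists_partly_internal w z : is_ext line w -> 0 < n_int z ->
  exists x, 0 < n_int x < 3.
Proof.
move=> ext_w z_gt0.
have [x x_partly | no_partly] := pickP [pred x | 0 < n_int x < 3]; first by exists x.
have all_int x : 0 < n_int x -> n_int x == 3.
  move=> x_gt0; rewrite eqn_leq n_int_faces_le3.
  by have := no_partly x; rewrite /= x_gt0 /= ltnNge => /negbFE.
have closed3 : closed (col_adj kind line) [pred x | n_int x == 3].
  apply: intro_closed; first exact/sym_connect_sym/col_adj_sym.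
  move=> p q; rewrite !inE /col_adj => adj /eqP p3.
  case/or4P: adj => [/andP [/eqP <- _] | /eqP <- | /eqP <- | /eqP <-];
    by [rewrite n_int_faces_line p3 | exact: all_int (n_int_faces_cedge_gt0 _ p3)].
have := closed_connect closed3 (conn z w).
by rewrite !inE (n_int_faces_ext ext_w) (all_int _ z_gt0).
Qed.
End InternalFaces.

Lemma F_int_add_N_ext_leq V (kind : 'I_V -> bkind) (line : bvert V -> bvert V) :
  involutive line -> connected_graph kind line -> 0 < N_ext line ->
  F_int kind line + N_ext line <= 2 * V + 2.
Proof.
have [n] := ubnP #|line_ends line|; elim: n line => // n IHn line.
rewrite ltnS => le_ends_n lineK conn N_gt0.
have ends := N_ext_line_ends line.
have [F0 | F_gt0] := posnP (F_int kind line).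
  by have := line_ends_tree_bound lineK conn; rewrite F0; lia.
have [z z_gt0] := exists_int_faces F_gt0.
have [w ext_w] : exists w, is_ext line w.
  by case/card_gt0P: N_gt0 => w; rewrite inE; exists w.
have [x /andP [x_gt0 x_lt3]] := exists_partly_internal lineK conn ext_w z_gt0.
have [c int_x] := n_int_faces_gt0P kind line x x_gt0.
have lxx : line x != x := internal_face_ext int_x (face_id kind line c x).
have := IHn (cut_line line x) _ (cut_lineK x lineK) (connected_cut lineK int_x conn).
have := N_ext_line_ends (cut_line line x); rewrite N_ext_cut // => ends_cut.
have := F_int_cut kind lineK x; lia.
Qed.

Import GRing.Theory Num.Theory.
Local Open Scope ring_scope.

Lemma omega_deg_le V (kind : 'I_V -> bkind) (line : bvert V -> bvert V) :
  involutive line -> connected_graph kind line -> (0 < N_ext line)%N ->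
  omega_deg kind line <= 2 - (N_ext line)%:R / 2.
Proof.
move=> lineK conn N_gt0; have := F_int_add_N_ext_leq lineK conn N_gt0.
rewrite /omega_deg; move: (F_int _ _) (N_ext _) => F N.
by rewrite -(ler_nat rat) !natrD => ?; lra.
Qed.

Theorem theorem2 (V : nat) (kind : 'I_V -> bkind) (line : bvert V -> bvert V)
  (line_invol : involutive line)
  (conn : connected_graph kind line) :
  let N := N_ext line in
  let w := omega_deg kind line in
  [/\ (6 <= N)%N -> w <= - (N%:R) / 12,
      N = 4%N -> w <= 0
    & N = 2%N -> w <= 1].
Proof.
move=> N w; have w_le : (0 < N)%N -> w <= 2 - N%:R / 2 := omega_deg_le line_invol conn.
split=> [N_ge6 | N4 | N2].
- have /w_le : (0 < N)%N by apply: leq_trans N_ge6.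
  by rewrite -(ler_nat rat) in N_ge6; lra.
- by move: w_le; rewrite N4 => /(_ isT); lra.
- by move: w_le; rewrite N2 => /(_ isT); lra.
Qed.
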